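(* Let $c>0$ be a constant and $G=G_{n,c/n}$ with vertex set $V=[n]$. Let $b_0=\ln^{1/4}n$ and $V_0=\{v\in V:\deg(v)\ge b_0\}$. Then with high probability there is no set $S\subseteq V_0$ with $|S|\ge \ln^{7/8}n$ such that $G^5[S]$ is connected.
   Context: For a graph $G$ and integer $i\ge1$, $G^i$ is the graph on $V(G)$ in which $u\ne v$ are adjacent iff $d_G(u,v)\le i$. ''With high probability'' means with probability $\to1$ as $n\to\infty$. *)

From HB Require Import structures.
From mathcomp Require Import all_boot.
From Stdlib Require Import Reals.

Set Implicit Arguments.
Unset Strict Implicit.
Unset Printing Implicit Defensive.

(* A simple graph on vertex set [n] = 'I_n: the entry g (u,v) for u < v
   records whether {u,v} is an edge; entries with u >= v are irrelevant
   (and get probability weight forcing them to false, see edge_weight). *)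
Definition graph (n : nat) := {ffun 'I_n * 'I_n -> bool}.

Definition adj (n : nat) (g : graph n) (u v : 'I_n) : bool :=
  (u != v) && (if (u < v)%N then g (u, v) else g (v, u)).

Definition deg (n : nat) (g : graph n) (v : 'I_n) : nat :=
  #|[set w | adj g v w]|.

Fixpoint ball (n : nat) (g : graph n) (k : nat) (u : 'I_n) : {set 'I_n} :=
  match k with
  | 0 => [set u]
  | k'.+1 => let B := ball g k' u in
             B :|: [set y | [exists x in B, adj g x y]]
  end.

Definition gpow (n : nat) (g : graph n) (i : nat) (u v : 'I_n) : bool :=
  (u != v) && (v \in ball g i u).

Definition induced_connected (n : nat) (r : rel 'I_n) (S : {set 'I_n}) : bool :=
  [forall u in S, forall v in S,
     connect (fun x y => [&& x \in S, y \in S & r x y]) u v].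

Definition Rleb (x y : R) : bool := if Rle_dec x y then true else false.

Definition b0 (n : nat) : R := Rpower (ln (INR n)) (1/4).

Definition V0 (n : nat) (g : graph n) : {set 'I_n} :=
  [set v | Rleb (b0 n) (INR (deg g v))].

Definition bad_set (n : nat) (g : graph n) (S : {set 'I_n}) : bool :=
  [&& S \subset V0 g,
      Rleb (Rpower (ln (INR n)) (7/8)) (INR #|S|)
    & induced_connected (gpow g 5) S].

Definition edge_weight (n : nat) (p : R) (g : graph n) (e : 'I_n * 'I_n) : R :=
  if (e.1 < e.2)%N then (if g e then p else 1 - p)%R
  else (if g e then 0 else 1)%R.

Definition weight (n : nat) (p : R) (g : graph n) : R :=
  foldr Rmult 1%R (map (edge_weight p g) (enum [set: 'I_n * 'I_n])).

Definition gnp_prob (n : nat) (p : R) (E : pred (graph n)) : R :=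
  foldr Rplus 0%R (map (weight p) (filter E (enum [set: graph n]))).

From Pilot Require Import Defs.
From mathcomp Require Import all_boot all_algebra.
From Stdlib Require Import Reals Lra Lia ZArith.
From mathcomp Require Import Rstruct zify.
Set Implicit Arguments. Unset Strict Implicit. Unset Printing Implicit Defensive.

(* This is a first-moment argument.  Let t = floor (ln^{1/8} n) and put
   s = t^7, B = t^2, d = t^8, so that s <= ln^{7/8} n and B <= b0.  From a
   bad set S we extract a "witness":
   - since G^5[S] is connected, s vertices A of S are spanned by a subtree
     of G with k <= 5s vertices (each new vertex of S is at distance <= 5
     from the tree grown so far);
   - every vertex of A has degree >= B, so by double counting at least
     sB/2 edges of G meet A; as 2(d + 5s) <= sB, at least d of them are
     not tree edges.
   The k-1 tree edges and d extra edges are present simultaneously with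
   probability p^(k-1+d).  There are at most n^k k^k 2^k (2sn)^d / d!
   witnesses with a tree on k vertices, so the union bound gives
   P(bad) <= (5s+1) n (10(c+1)s)^{5s} (2sc)^d / d!, which by d! >= (d/e)^d
   and n <= exp((t+1)^8) is at most exp(-t) once t is large.  Since t
   tends to infinity with n, P(bad) -> 0. *)

Open Scope R_scope.

Lemma Rsum_le (I : finType) (P : pred I) (F G : I -> R) :
  (forall i, P i -> F i <= G i) ->
  \big[Rplus/0]_(i | P i) F i <= \big[Rplus/0]_(i | P i) G i.
Proof. by move=> FG; apply: (big_ind2 (fun a b => a <= b)) => // *; lra. Qed.

Lemma Rsum_ge0 (I : finType) (P : pred I) (F : I -> R) :
  (forall i, P i -> 0 <= F i) -> 0 <= \big[Rplus/0]_(i | P i) F i.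
Proof. by move=> F0; apply: (big_ind (fun a => 0 <= a)) => // *; lra. Qed.

Lemma Rprod_ge0 (I : finType) (P : pred I) (F : I -> R) :
  (forall i, P i -> 0 <= F i) -> 0 <= \big[Rmult/1]_(i | P i) F i.
Proof.
by move=> F0; apply: (big_ind (fun a => 0 <= a)) => // *; [lra | apply: Rmult_le_pos].
Qed.

Lemma Rsum_ge_term (I : finType) (F : I -> R) (i0 : I) :
  (forall i, 0 <= F i) -> F i0 <= \big[Rplus/0]_i F i.
Proof.
move=> F0; rewrite (bigD1 i0) //=.
have := @Rsum_ge0 _ (fun i => i != i0) F (fun i _ => F0 i); lra.
Qed.

Lemma Rsum_const (I : finType) (P : pred I) (a : R) :
  \big[Rplus/0]_(i | P i) a = INR #|P| * a.
Proof.
rewrite big_const; elim: #|P| => [|m IH]; first by simpl; lra.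
by rewrite S_INR /= IH; lra.
Qed.

Lemma Rprod_const (I : finType) (P : pred I) (a : R) :
  \big[Rmult/1]_(i | P i) a = a ^ #|P|.
Proof. by rewrite big_const; elim: #|P| => [|m IH] //=; rewrite IH. Qed.

Lemma foldr_Rplus_big (T : Type) (f : T -> R) (s : seq T) :
  foldr Rplus 0 (map f s) = \big[Rplus/0]_(x <- s) f x.
Proof. by elim: s => [|x s IH] /=; rewrite ?big_nil ?big_cons ?IH. Qed.

Lemma foldr_Rmult_big (T : Type) (f : T -> R) (s : seq T) :
  foldr Rmult 1 (map f s) = \big[Rmult/1]_(x <- s) f x.
Proof. by elim: s => [|x s IH] /=; rewrite ?big_nil ?big_cons ?IH. Qed.

(* Defs.Rleb, the boolean comparison used (not Rstruct's Rleb) *)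
Lemma Rleb_Rle (x y : R) : Defs.Rleb x y -> x <= y.
Proof. by rewrite /Defs.Rleb; case: (Rle_dec x y). Qed.

Lemma INR_expn (a b : nat) : INR (expn a b) = INR a ^ b.
Proof. by elim: b => [//|b IH]; rewrite expnS mult_INR IH. Qed.

Lemma INR_fact_gt0 (m : nat) : 0 < INR m`!.
Proof. by apply: lt_0_INR; apply/ltP; exact: fact_gt0. Qed.

Section Gnp.
Variables (n : nat) (p : R).
Hypotheses (p_ge0 : 0 <= p) (p_le1 : p <= 1).

Definition pair_weight (e : 'I_n * 'I_n) (b : bool) : R :=
  if (e.1 < e.2)%nat then (if b then p else 1 - p) else (if b then 0 else 1).

Lemma weightE (g : graph n) : weight p g = \big[Rmult/1]_e pair_weight e (g e).
Proof.
rewrite /weight foldr_Rmult_big big_enum /=.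
by apply: eq_bigl => e; rewrite inE.
Qed.

Lemma weight_ge0 (g : graph n) : 0 <= weight p g.
Proof.
rewrite weightE; apply: Rprod_ge0 => e _.
by rewrite /pair_weight; case: (_ < _)%nat; case: (g e); lra.
Qed.

Lemma gnp_probE (E : pred (graph n)) :
  gnp_prob p E = \big[Rplus/0]_g (if E g then weight p g else 0).
Proof.
rewrite /gnp_prob foldr_Rplus_big big_filter big_enum_cond /= big_mkcond /=.
by apply: eq_bigr => g _; rewrite inE.
Qed.

Lemma gnp_prob_ext (E E' : pred (graph n)) : E =1 E' ->
  gnp_prob p E = gnp_prob p E'.
Proof. by move=> EE'; rewrite !gnp_probE; apply: eq_bigr => g _; rewrite EE'. Qed.

Lemma gnp_prob_ge0 (E : pred (graph n)) : 0 <= gnp_prob p E.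
Proof.
rewrite gnp_probE; apply: Rsum_ge0 => g _.
by case: (E g); [exact: weight_ge0 | lra].
Qed.

Lemma gnp_prob_mono (E E' : pred (graph n)) : (forall g, E g -> E' g) ->
  gnp_prob p E <= gnp_prob p E'.
Proof.
move=> EE'; rewrite !gnp_probE; apply: Rsum_le => g _.
case Eg: (E g); first by rewrite (EE' _ Eg); lra.
by case: (E' g); [exact: weight_ge0 | lra].
Qed.

(* A set F of pairs u < v is contained in the edge set of G(n,p) with
   probability p^|F|: the sum over graphs factorizes pair by pair. *)
Definition ordered_pairs (F : {set 'I_n * 'I_n}) := forall e, e \in F -> (e.1 < e.2)%nat.

Lemma gnp_prob_edges (F : {set 'I_n * 'I_n}) : ordered_pairs F ->
  gnp_prob p (fun g => F \subset [set e | g e]) = p ^ #|F|.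
Proof.
move=> ordF; rewrite gnp_probE.
pose H e b := if (e \in F) && ~~ b then 0 else pair_weight e b.
transitivity (\big[Rplus/0]_(g : graph n) \big[Rmult/1]_e H e (g e)).
  apply: eq_bigr => g _; rewrite weightE; case: ifP => sub.
    apply: eq_bigr => e _; rewrite /H; case eF: (e \in F) => //=.
    by move/subsetP: sub => /(_ e eF); rewrite inE => ->.
  have [e eF ge] : exists2 e, e \in F & g e = false.
    by move/negbT: sub => /subsetPn [e eF]; rewrite inE => /negbTE; exists e.
  by rewrite (bigD1 e) //= /H eF ge /=; lra.
rewrite -(bigA_distr_bigA H) /=.
transitivity (\big[Rmult/1]_(e : 'I_n * 'I_n) (if e \in F then p else 1)).
  apply: eq_bigr => e _; rewrite big_bool /H /pair_weight /=.
  by case eF: (e \in F) => /=; [rewrite (ordF e eF) | case: (_ < _)%nat]; lra.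
by rewrite -big_mkcond /= Rprod_const; congr (_ ^ _); apply: eq_card.
Qed.

Lemma gnp_prob_total : gnp_prob p (predT : pred (graph n)) = 1.
Proof.
have := @gnp_prob_edges set0 (fun e => ltac:(by rewrite inE)).
rewrite cards0 /= => <-; apply: gnp_prob_ext => g; by rewrite sub0set.
Qed.

Lemma gnp_prob_compl (E : pred (graph n)) :
  gnp_prob p (fun g => ~~ E g) = 1 - gnp_prob p E.
Proof.
rewrite -gnp_prob_total !gnp_probE.
have -> : \big[Rplus/0]_(g : graph n) (if predT g then weight p g else 0) =
  \big[Rplus/0]_(g : graph n) ((if E g then weight p g else 0) +
                               (if ~~ E g then weight p g else 0)).
  by apply: eq_bigr => g _ /=; case: (E g) => /=; lra.
rewrite big_split /=; lra.
Qed.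

Lemma gnp_prob_union (I : finType) (E : I -> pred (graph n)) :
  gnp_prob p (fun g => [exists i, E i g]) <= \big[Rplus/0]_i gnp_prob p (E i).
Proof.
have pos i g : 0 <= (if E i g then weight p g else 0).
  by case: (E i g); [exact: weight_ge0 | lra].
rewrite gnp_probE (eq_bigr _ (fun i _ => gnp_probE (E i))) exchange_big /=.
apply: Rsum_le => g _; case: existsP => [[i Ei] | _]; last exact: Rsum_ge0.
by apply: Rle_trans (Rsum_ge_term i (pos^~ g)); rewrite Ei; lra.
Qed.

End Gnp.

Close Scope R_scope.

Lemma adjC n (g : graph n) (u v : 'I_n) : adj g u v = adj g v u.
Proof.
rewrite /adj eq_sym; case: eqVneq => //= uv.
by case: (ltngtP u v) => // /val_inj eq_uv; rewrite eq_uv eqxx in uv.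
Qed.

Lemma exists_subset_card (T : finType) (X : {set T}) (d : nat) : d <= #|X| ->
  exists2 D : {set T}, D \subset X & #|D| = d.
Proof.
move=> dX; exists [set x in take d (enum X)].
  by apply/subsetP => x; rewrite inE => /mem_take; rewrite mem_enum.
by rewrite cardsE (card_uniqP _) ?take_uniq ?enum_uniq // size_takel // -cardE.
Qed.

Lemma connect_exit (T : finType) (r : rel T) (A : pred T) (a v : T) :
  connect r a v -> a \in A -> v \notin A ->
  exists x y, [/\ x \in A, y \notin A & r x y].
Proof.
case/connectP => q; elim: q a => [|z q IH] a /=; first by move=> _ -> ->.
case/andP => raz qz lastq aA vA.
case zA: (z \in A); first exact: (IH z qz lastq zA vA).
by exists a, z; rewrite zA.
Qed.

(* Trees in g rooted at u0, encoded by a duplicate-free list xs of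
   vertices together with a parent index (into xs) for every non-root
   entry; the parent comes earlier and is adjacent. *)
Section Trees.
Variables (n : nat) (g : graph n) (u0 : 'I_n).

Definition is_tree (xs : seq 'I_n) (ps : seq nat) :=
  [/\ uniq xs, size ps = size xs &
   forall i, i < size xs -> 0 < i ->
     nth 0 ps i < i /\ adj g (nth u0 xs i) (nth u0 xs (nth 0 ps i))].

Lemma is_tree_rcons xs ps y v : is_tree xs ps -> y \in xs -> v \notin xs ->
  adj g y v -> is_tree (rcons xs v) (rcons ps (index y xs)).
Proof.
case=> uxs sps Hxs yxs vxs ayv; split; first by rewrite rcons_uniq vxs.
  by rewrite !size_rcons sps.
rewrite size_rcons => i; rewrite ltnS leq_eqVlt => /orP [/eqP -> | ilt] i0.
  have yi : index y xs < size xs by rewrite index_mem.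
  by rewrite !nth_rcons -sps ltnn eqxx sps yi nth_index // adjC.
have [lt_par adj_par] := Hxs i ilt i0.
by rewrite !nth_rcons sps ilt (leq_trans lt_par (ltnW ilt)).
Qed.

Lemma is_tree_grow j xs ps u v : is_tree xs ps -> u \in xs -> v \in ball g j u ->
  exists ys qs, [/\ is_tree (xs ++ ys) (ps ++ qs), v \in xs ++ ys & size ys <= j].
Proof.
move=> Txs uxs; elim: j v => [|j IH] v /=.
  by rewrite inE => /eqP ->; exists [::], [::]; rewrite !cats0.
rewrite inE => /orP [vball | ].
  have [ys [qs [T' vin sz]]] := IH v vball.
  by exists ys, qs; split => //; exact: leqW.
rewrite inE => /existsP [x /andP [xball axv]].
have [ys [qs [T' xin sz]]] := IH x xball.
case vin: (v \in xs ++ ys); first by exists ys, qs; split => //; exact: leqW.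
exists (rcons ys v), (rcons qs (index x (xs ++ ys))); rewrite -!rcons_cat.
split; last by rewrite size_rcons.
  by apply: is_tree_rcons => //; rewrite vin.
by rewrite mem_rcons inE eqxx.
Qed.

Lemma tree_through_gpow5 (S : {set 'I_n}) (m : nat) : u0 \in S ->
  induced_connected (gpow g 5) S -> 0 < m -> m <= #|S| ->
  exists xs ps (A : {set 'I_n}),
    [/\ is_tree xs ps, A \subset S, {subset A <= xs}, #|A| = m & size xs <= 5 * m].
Proof.
move=> u0S conn; elim: m => [//|[|m] IH] _ mS.
  exists [:: u0], [:: 0], [set u0]; split; rewrite ?sub1set ?cards1 //.
    by split => //= -[|i] //; rewrite ltnS leqn0.
  by move=> x; rewrite inE => /eqP ->; rewrite inE.
have [xs [ps [A [Txs AS Axs cardA sz]]]] := IH (erefl _) (ltnW mS).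
have [v vS vA] : exists2 v, v \in S & v \notin A.
  apply/subsetPn; apply/negP => /subset_leq_card; rewrite cardA.
  by move: mS; rewrite leqNgt => /negP.
have [a aA] : exists a, a \in A by apply/card_gt0P; rewrite cardA.
have aS : a \in S by apply: (subsetP AS).
move: conn => /forall_inP /(_ a aS) /forall_inP /(_ v vS) path_av.
have [x [y [xA yA /and3P [_ yS /andP [_ y_near]]]]] := connect_exit path_av aA vA.
have [ys [qs [T' yin sz']]] := is_tree_grow Txs (Axs x xA) y_near.
exists (xs ++ ys), (ps ++ qs), (y |: A); split => //.
- by apply/subsetP => z; rewrite !inE => /orP [/eqP -> | /(subsetP AS)].
- by move=> z; rewrite !inE => /orP [/eqP -> // | zA]; rewrite mem_cat Axs.
- by rewrite cardsU1 yA cardA.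
- by rewrite size_cat; apply: leq_trans (leq_add sz sz') _; rewrite (mulnS 5 m.+1) addnC.
Qed.

End Trees.

(* A witness on k tree vertices is a quadruple (x, par, sel, D):
   x : 'I_k -> 'I_n labels the tree vertices injectively, par gives each
   non-root vertex an earlier parent, sel selects the s vertices of the
   bad set, and D is a set of d extra edges meeting x @: sel. *)
Local Notation wvertex w := w.1.1.1.
Local Notation wparent w := w.1.1.2.
Local Notation wselect w := w.1.2.
Local Notation wextra w := w.2.

Section Witnesses.
Variable n : nat.

Definition edge_of (u v : 'I_n) : 'I_n * 'I_n := if u < v then (u, v) else (v, u).

Lemma edge_of_ordered u v : u != v -> (edge_of u v).1 < (edge_of u v).2.
Proof.
rewrite /edge_of => uv; case: (ltngtP u v) => //= /val_inj eq_uv.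
by rewrite eq_uv eqxx in uv.
Qed.

Lemma edge_of_inj u v u' v' : edge_of u v = edge_of u' v' ->
  (u = u' /\ v = v') \/ (u = v' /\ v = u').
Proof. by rewrite /edge_of; case: ifP; case: ifP => _ _ [-> ->]; by [left | right]. Qed.

Lemma adj_edge_of (g : graph n) u v : adj g u v -> g (edge_of u v).
Proof. by rewrite /adj /edge_of => /andP [_]; case: ifP. Qed.

Definition witness (k : nat) := ({ffun 'I_k -> 'I_n} * {ffun 'I_k -> 'I_k} *
  {set 'I_k} * {set 'I_n * 'I_n})%type.

Definition tree_edges k (x : {ffun 'I_k -> 'I_n}) (par : {ffun 'I_k -> 'I_k}) :=
  [set edge_of (x i) (x (par i)) | i in [set i : 'I_k | 0 < i]].

Definition incident (A : {set 'I_n}) : {set 'I_n * 'I_n} :=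
  [set e : 'I_n * 'I_n | (e.1 < e.2) && ((e.1 \in A) || (e.2 \in A))].

Definition valid_witness (s d k : nat) (w : witness k) : bool :=
  [&& injectiveb (wvertex w), [forall i : 'I_k, (0 < i) ==> (wparent w i < i)],
      #|wselect w| == s, wextra w \subset incident (wvertex w @: wselect w),
      #|wextra w| == d & [disjoint wextra w & tree_edges (wvertex w) (wparent w)]].

Definition witness_event (s d k : nat) (w : witness k) (g : graph n) : bool :=
  valid_witness s d w &&
  ((tree_edges (wvertex w) (wparent w) :|: wextra w) \subset [set e | g e]).

Lemma card_nonroot k : #|[set i : 'I_k | 0 < i]| = k.-1.
Proof.
case: k => [|k].
  by apply/eqP; rewrite -leqn0; apply: leq_trans (max_card _) _; rewrite card_ord.
rewrite -[in RHS](card_ord k.+1) -(cardsC1 ord0); apply: eq_card => i.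
by rewrite !inE lt0n; congr negb; apply/eqP/eqP => [/val_inj | ->].
Qed.

Lemma tree_edges_spec k (x : {ffun 'I_k -> 'I_n}) (par : {ffun 'I_k -> 'I_k}) :
  injective x -> (forall i : 'I_k, 0 < i -> par i < i) ->
  #|tree_edges x par| = k.-1 /\ ordered_pairs (tree_edges x par).
Proof.
move=> xinj par_lt; split.
  rewrite card_in_imset ?card_nonroot // => i j; rewrite !inE => i0 j0.
  case/edge_of_inj => [[/xinj //] | [/xinj eq_i /xinj eq_j]].
  have := par_lt _ i0; have := par_lt _ j0; rewrite -eq_i -eq_j => lt1 lt2.
  by have := ltn_trans lt1 lt2; rewrite ltnn.
move=> e /imsetP [i]; rewrite inE => i0 ->; apply: edge_of_ordered.
by apply/negP => /eqP /xinj eq_i; have := par_lt _ i0; rewrite -eq_i ltnn.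
Qed.

End Witnesses.

Open Scope R_scope.

Lemma gnp_prob_witness n (p : R) s d k (w : witness n k) :
  gnp_prob p (witness_event s d w) =
  if valid_witness s d w then p ^ (k.-1 + d) else 0.
Proof.
case vw: (valid_witness s d w); last first.
  by rewrite (@gnp_prob_ext _ _ _ (fun _ => false)) ?gnp_probE ?big1 // => g;
     rewrite /witness_event vw.
move: (vw) => /and5P [/injectiveP xinj /forallP par_lt _ D_inc /andP [/eqP cardD disj]].
have [cardT ordT] := tree_edges_spec xinj (fun i => implyP (par_lt i)).
rewrite (@gnp_prob_ext _ _ _ (fun g => (tree_edges (wvertex w) (wparent w) :|: wextra w)
  \subset [set e | g e])); last by move=> g; rewrite /witness_event vw.
rewrite gnp_prob_edges.
  by rewrite cardsU cardT cardD; move: disj; rewrite -setI_eq0 setIC => /eqP ->;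
     rewrite cards0 subn0.
move=> e; rewrite inE => /orP [/ordT // | /(subsetP D_inc)].
by rewrite inE => /andP [].
Qed.

Close Scope R_scope.

Lemma sum_indicator (T : finType) (A : {set T}) (P : pred T) :
  \sum_(i in A) (P i : nat) = #|[set i in A | P i]|.
Proof.
rewrite -sum1_card [RHS](eq_bigl (fun i => (i \in A) && P i)) => [|i]; last by rewrite inE.
by rewrite big_mkcondr /=; apply: eq_bigr => i _; case: (P i).
Qed.

Section Handshake.
Variables (n : nat) (g : graph n).

Definition edges_at (a : 'I_n) : {set 'I_n * 'I_n} :=
  [set edge_of a w | w in [set w | adj g a w]].

Definition incident_edges (A : {set 'I_n}) := incident A :&: [set e | g e].

Lemma card_edges_at a : #|edges_at a| = deg g a.
Proof.
rewrite /deg card_in_imset // => w w'; rewrite !inE => aw aw'.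
by case/edge_of_inj => [[_ //] | [eq_a _]]; rewrite -eq_a /adj eqxx in aw'.
Qed.

Lemma edges_at_incident (A : {set 'I_n}) a : a \in A -> edges_at a \subset incident_edges A.
Proof.
move=> aA; apply/subsetP => e /imsetP [w]; rewrite inE => aw ->.
rewrite !inE adj_edge_of // andbT edge_of_ordered; last by case/andP: aw.
by rewrite /edge_of; case: ifP => _ /=; rewrite aA ?orbT.
Qed.

Lemma edges_at_end a e : e \in edges_at a -> a \in [set e.1; e.2].
Proof.
by case/imsetP => w _ ->; rewrite /edge_of !inE; case: ifP => _ /=; rewrite eqxx ?orbT.
Qed.

Lemma handshake_lower (A : {set 'I_n}) (B : nat) :
  (forall a, a \in A -> B <= deg g a) -> #|A| * B <= 2 * #|incident_edges A|.
Proof.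
move=> degA.
have deg_sum : #|A| * B <= \sum_(a in A) #|edges_at a|.
  by rewrite -sum_nat_const; apply: leq_sum => a aA; rewrite card_edges_at degA.
apply: leq_trans deg_sum _.
have -> : \sum_(a in A) #|edges_at a| =
          \sum_(a in A) \sum_(e in incident_edges A) (e \in edges_at a : nat).
  apply: eq_bigr => a aA; rewrite sum_indicator; apply: eq_card => e.
  rewrite !inE; case eN: (e \in edges_at a); rewrite ?andbF ?andbT //.
  by have := subsetP (edges_at_incident aA) e eN; rewrite !inE => ->.
rewrite exchange_big /= mulnC -sum_nat_const; apply: leq_sum => e _.
rewrite sum_indicator; apply: leq_trans (_ : #|[set e.1; e.2]| <= 2).
  by apply: subset_leq_card; apply/subsetP => a; rewrite inE => /andP [_ /edges_at_end].
by rewrite cards2; case: (_ != _).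
Qed.

End Handshake.

Lemma labelled_tree n (g : graph n) (S : {set 'I_n}) (s : nat) :
  0 < s -> s <= #|S| -> induced_connected (gpow g 5) S ->
  exists (k : 'I_(5 * s).+1) (x : {ffun 'I_k -> 'I_n}) (par : {ffun 'I_k -> 'I_k})
         (sel : {set 'I_k}),
    [/\ injective x, forall i : 'I_k, 0 < i -> par i < i, #|sel| = s,
        x @: sel \subset S & tree_edges x par \subset [set e | g e]].
Proof.
move=> s_gt0 sS conn.
have [u0 u0S] : exists u0, u0 \in S by apply/card_gt0P; apply: leq_trans s_gt0 sS.
have [xs [ps [A [[uxs sps Hxs] AS Axs cardA sz]]]] := tree_through_gpow5 u0S conn s_gt0 sS.
pose k := size xs; exists (Ordinal (sz : k < (5 * s).+1)).
pose x : {ffun 'I_k -> 'I_n} := [ffun i : 'I_k => nth u0 xs i].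
pose par : {ffun 'I_k -> 'I_k} := [ffun i : 'I_k => insubd i (nth 0 ps i)].
have par_lt (i : 'I_k) : 0 < i -> par i < i.
  move=> i0; have [lt_par _] := Hxs i (ltn_ord i) i0.
  by rewrite ffunE val_insubd (ltn_trans lt_par (ltn_ord i)).
have xinj : injective x.
  by move=> i j; rewrite !ffunE => /eqP; rewrite nth_uniq // => /eqP /val_inj.
have xsel : x @: [set i | x i \in A] = A.
  apply/setP => a; apply/imsetP/idP => [[i] | aA]; first by rewrite inE => ? ->.
  have ai : index a xs < k by rewrite index_mem Axs.
  by exists (Ordinal ai); rewrite ?inE ffunE /= nth_index ?Axs.
exists x, par, [set i | x i \in A]; split => //; last 2 first.
- by rewrite xsel.
- apply/subsetP => e /imsetP [i]; rewrite inE => i0 ->; rewrite inE.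
  have [lt_par adj_par] := Hxs i (ltn_ord i) i0.
  by apply: adj_edge_of; rewrite !ffunE val_insubd (ltn_trans lt_par (ltn_ord i)).
by rewrite -(card_imset _ xinj) xsel cardA.
Qed.

Lemma witness_exists n (g : graph n) (S : {set 'I_n}) (s B d : nat) :
  0 < s -> s <= #|S| -> induced_connected (gpow g 5) S ->
  (forall a, a \in S -> B <= deg g a) -> 2 * (d + 5 * s) <= s * B ->
  exists (k : 'I_(5 * s).+1) (w : witness n k), witness_event s d w g.
Proof.
move=> s_gt0 sS conn degS sizes.
have [k [x [par [sel [xinj par_lt cardsel selS treeg]]]]] := labelled_tree s_gt0 sS conn.
have [cardT _] := tree_edges_spec xinj par_lt.
have many_incident : s * B <= 2 * #|incident_edges g (x @: sel)|.
  have := @handshake_lower n g (x @: sel) B (fun a aS => degS a (subsetP selS a aS)).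
  by rewrite (card_imset _ xinj) cardsel.
pose X := incident_edges g (x @: sel) :\: tree_edges x par.
have dX : d <= #|X|.
  have := subset_leq_card (subsetIr (incident_edges g (x @: sel)) (tree_edges x par)).
  by rewrite cardsD cardT; have := ltn_ord k; lia.
have [D DX cardD] := exists_subset_card dX.
have DI : D \subset incident_edges g (x @: sel) by apply: subset_trans DX (subsetDl _ _).
exists k, (x, par, sel, D); apply/andP; split.
  apply/and5P; split => /=; rewrite ?cardsel ?cardD ?eqxx //=.
  - exact/injectiveP.
  - by apply/forallP => i; apply/implyP/par_lt.
  - exact: subset_trans DI (subsetIl _ _).
  - rewrite disjoints_subset; apply: subset_trans DX _.
    by apply/subsetP => e; rewrite !inE => /andP [].
by rewrite subUset treeg /=; apply: subset_trans DI (subsetIr _ _).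
Qed.

Open Scope R_scope.

Lemma bad_prob_le_witness_sum (n : nat) (p : R) (s B d : nat) :
  0 <= p <= 1 -> (0 < s)%nat -> INR s <= Rpower (ln (INR n)) (7/8) ->
  INR B <= b0 n -> (2 * (d + 5 * s) <= s * B)%nat ->
  gnp_prob p (fun g : graph n => [exists S : {set 'I_n}, bad_set g S]) <=
  \big[Rplus/0]_(k : 'I_(5 * s).+1)
     (INR #|[set w : witness n k | valid_witness s d w]| * p ^ (k.-1 + d)).
Proof.
move=> [p_ge0 p_le1] s_gt0 s_small B_small sizes.
have bad_witness (g : graph n) : [exists S, bad_set g S] ->
    [exists k : 'I_(5 * s).+1, [exists w : witness n k, witness_event s d w g]].
  case/existsP => S /and3P [SV0 S_large conn].
  have sS : (s <= #|S|)%nat.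
    by apply/leP; apply: INR_le; apply: Rle_trans s_small (Rleb_Rle S_large).
  have degS a : a \in S -> (B <= deg g a)%nat.
    move=> /(subsetP SV0); rewrite inE => /Rleb_Rle deg_large.
    by apply/leP; apply: INR_le; lra.
  have [k [w ev]] := witness_exists s_gt0 sS conn degS sizes.
  by apply/existsP; exists k; apply/existsP; exists w.
apply: Rle_trans (gnp_prob_mono p_ge0 p_le1 bad_witness) _.
apply: Rle_trans (gnp_prob_union p_ge0 p_le1 _) _; apply: Rsum_le => k _.
apply: Rle_trans (gnp_prob_union p_ge0 p_le1 _) _.
rewrite (eq_bigr _ (fun w _ => gnp_prob_witness p s d w)) -big_mkcond /= Rsum_const.
by right; congr (INR _ * _); apply: eq_card => w; rewrite inE.
Qed.

Close Scope R_scope.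

Lemma leq_expn2r (m M d : nat) : m <= M -> expn m d <= expn M d.
Proof. by move=> mM; elim: d => // d IH; rewrite !expnS leq_mul. Qed.

Lemma ffact_le_expn (m d : nat) : m ^_ d <= expn m d.
Proof.
elim: d m => [//|d IH] m; rewrite ffactnS expnS leq_mul //.
by apply: leq_trans (IH _) _; apply: leq_expn2r; exact: leq_pred.
Qed.

Lemma card_set_of (T : finType) : #|{set T}| = expn 2 #|T|.
Proof. by rewrite -[LHS]cardsT -powersetT card_powerset cardsT. Qed.

Lemma card_incident n (A : {set 'I_n}) : #|incident A| <= 2 * #|A| * n.
Proof.
have sub : incident A \subset setX A [set: 'I_n] :|: setX [set: 'I_n] A.
  by apply/subsetP => e; rewrite !inE => /andP [_ /orP [-> | ->]]; rewrite ?orbT.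
apply: leq_trans (subset_leq_card sub) _; apply: leq_trans (leq_card_setU _ _) _.
by rewrite !cardsX cardsT card_ord mul2n -addnn mulnDl mulnC.
Qed.

(* Counting witnesses: n^k k^k 2^k choices of (x, par, sel), and at most
   (2sn)^d / d! choices of the d extra edges among the <= 2sn pairs
   meeting the s selected vertices. *)
Lemma count_witnesses n (s d k : nat) :
  #|[set w : witness n k | valid_witness s d w]| * d`! <=
  expn n k * expn k k * expn 2 k * expn (2 * s * n) d.
Proof.
pose extra_ok (a : {ffun 'I_k -> 'I_n} * {ffun 'I_k -> 'I_k} * {set 'I_k})
  (D : {set 'I_n * 'I_n}) := [&& #|a.2| == s, D \subset incident (a.1.1 @: a.2) & #|D| == d].
have split_count : #|[set w : witness n k | valid_witness s d w]| <=
    \sum_a \sum_D (extra_ok a D : nat).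
  rewrite pair_bigA /= -sum1_card big_mkcond /=; apply: leq_sum => w _.
  rewrite inE; case vw: (valid_witness s d w) => //.
  by move/and5P: vw => [_ _ cards D_inc /andP [cardD _]]; rewrite /extra_ok cards D_inc cardD.
have extra_count a : (\sum_D (extra_ok a D : nat)) * d`! <= expn (2 * s * n) d.
  rewrite /extra_ok; case: eqP => [cards | _] /=; last by rewrite big1.
  have -> : \sum_(D : {set 'I_n * 'I_n})
              ((D \subset incident (a.1.1 @: a.2)) && (#|D| == d) : nat)
      = #|[set D : {set 'I_n * 'I_n} | D \subset incident (a.1.1 @: a.2) & #|D| == d]|.
    rewrite -sum1_card [RHS]big_mkcond /=; apply: eq_bigr => D _.
    by rewrite inE; case: (_ && _).
  rewrite cards_draws bin_ffact.
  apply: leq_trans (ffact_le_expn _ _) _; apply: leq_expn2r.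
  apply: leq_trans (card_incident _) _; rewrite -cards -!mulnA leq_mul2l /= leq_mul2r.
  by rewrite leq_imset_card orbT.
apply: leq_trans (leq_mul split_count (leqnn _)) _.
rewrite big_distrl /=; apply: leq_trans; first by apply: leq_sum => a _; exact: extra_count.
rewrite sum_nat_const leq_mul2r; apply/orP; right; rewrite cardT -cardE.
by rewrite !card_prod !card_ffun !card_ord card_set_of card_ord.
Qed.

Open Scope R_scope.

Lemma exp_le_mono x y : x <= y -> exp x <= exp y.
Proof. by case=> [lt_xy | ->]; [left; exact: exp_increasing | lra]. Qed.

Lemma exp_pow_nat (y : R) (m : nat) : exp y ^ m = exp (INR m * y).
Proof.
elim: m => [|m IH]; first by rewrite /= Rmult_0_l exp_0.
by rewrite S_INR /= IH -exp_plus; congr exp; lra.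
Qed.

Lemma succ_pow_le (m : nat) : (INR m + 1) ^ m <= INR m ^ m * exp 1.
Proof.
case: m => [|m]; first by rewrite /=; have := exp_ineq1_le 1; lra.
set x := INR m.+1.
have x_gt0 : 0 < x by apply: lt_0_INR; lia.
have -> : x + 1 = x * (1 + / x) by field; lra.
rewrite Rpow_mult_distr; apply: Rmult_le_compat_l; first by apply: pow_le; lra.
apply: Rle_trans (_ : exp (/ x) ^ m.+1 <= _).
  apply: pow_incr; split; last exact: exp_ineq1_le.
  by have := Rinv_0_lt_compat _ x_gt0; lra.
by rewrite exp_pow_nat -/x; right; congr exp; field; lra.
Qed.

Lemma pow_self_le_fact (m : nat) : INR m ^ m <= INR m`! * exp (INR m).
Proof.
elim: m => [|m IH]; first by rewrite /= exp_0; lra.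
rewrite factS mult_INR S_INR /= exp_plus.
have m0 := pos_INR m; have e1 := exp_pos 1.
have step1 : (INR m + 1) * (INR m + 1) ^ m <= (INR m + 1) * (INR m ^ m * exp 1).
  by apply: Rmult_le_compat_l; [lra | exact: succ_pow_le].
have step2 : (INR m + 1) * (INR m ^ m * exp 1) <=
             (INR m + 1) * (INR m`! * exp (INR m) * exp 1).
  by apply: Rmult_le_compat_l; [lra | apply: Rmult_le_compat_r; lra].
lra.
Qed.

Lemma tree_factor_le (n : nat) (c : R) (s k : nat) : 1 <= INR n -> 0 < c ->
  (k <= 5 * s)%nat -> INR n ^ k * (c / INR n) ^ k.-1 <= INR n * (c + 1) ^ (5 * s).
Proof.
move=> n_ge1 c_gt0 k_le.
case: k k_le => [|j] k_le /=.
  have : 1 <= (c + 1) ^ (5 * s) by apply: pow_R1_Rle; lra.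
  nra.
have -> : INR n * INR n ^ j * (c / INR n) ^ j = INR n * c ^ j.
  rewrite /Rdiv Rpow_mult_distr pow_inv; field; apply: pow_nonzero; lra.
apply: Rmult_le_compat_l; first lra.
apply: Rle_trans (_ : (c + 1) ^ j <= _); first by apply: pow_incr; lra.
by apply: Rle_pow; [lra | apply/leP; apply: leq_trans k_le].
Qed.

Lemma label_factor_le (s k : nat) : (k <= 5 * s)%nat -> (0 < s)%nat ->
  INR k ^ k * 2 ^ k <= INR (10 * s) ^ (5 * s).
Proof.
move=> k_le s_gt0; rewrite -Rpow_mult_distr.
have ten_s : 1 <= INR (10 * s) by apply: (le_INR 1); apply/leP; lia.
apply: Rle_trans (_ : INR (10 * s) ^ k <= _); last by apply: Rle_pow => //; exact/leP.
apply: pow_incr; split; first by apply: Rmult_le_pos; [apply: pos_INR | lra].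
have -> : INR k * 2 = INR (k * 2) by rewrite mult_INR.
by apply: le_INR; apply/leP; lia.
Qed.

Lemma witness_term_le (n : nat) (c : R) (s d k : nat) : 1 <= INR n -> 0 < c ->
  (k <= 5 * s)%nat -> (0 < s)%nat ->
  INR #|[set w : witness n k | valid_witness s d w]| * (c / INR n) ^ (k.-1 + d) <=
  INR n * ((c + 1) * INR (10 * s)) ^ (5 * s) * (2 * INR s * c) ^ d / INR d`!.
Proof.
move=> n_ge1 c_gt0 k_le s_gt0.
have fact_gt0 := INR_fact_gt0 d.
have p_ge0 : 0 <= c / INR n by apply: Rle_mult_inv_pos; lra.
have count : INR #|[set w : witness n k | valid_witness s d w]| <=
    INR n ^ k * INR k ^ k * 2 ^ k * (2 * INR s * INR n) ^ d / INR d`!.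
  apply: (Rmult_le_reg_r (INR d`!)) => //.
  rewrite /Rdiv Rmult_assoc Rinv_l ?Rmult_1_r; last lra.
  rewrite -mult_INR; apply: Rle_trans (le_INR _ _ (elimT leP (count_witnesses n s d k))) _.
  by rewrite !mult_INR !INR_expn !mult_INR; right.
apply: Rle_trans (Rmult_le_compat_r _ _ _ (pow_le _ _ p_ge0) count) _.
have extra : (2 * INR s * INR n) ^ d * (c / INR n) ^ d = (2 * INR s * c) ^ d.
  by rewrite -Rpow_mult_distr; congr (_ ^ _); field; lra.
have tree := tree_factor_le n_ge1 c_gt0 k_le.
have label := label_factor_le k_le s_gt0.
have tree0 : 0 <= INR n ^ k * (c / INR n) ^ k.-1 by apply: Rmult_le_pos; apply: pow_le; lra.
have label0 : 0 <= INR k ^ k * 2 ^ k by apply: Rmult_le_pos; apply: pow_le; [apply: pos_INR | lra].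
have extra0 : 0 <= (2 * INR s * c) ^ d by apply: pow_le; have := pos_INR s; nra.
apply: (Rle_trans _ ((INR n ^ k * (c / INR n) ^ k.-1) * (INR k ^ k * 2 ^ k) *
   (2 * INR s * c) ^ d / INR d`!)).
  by right; rewrite pow_add -extra; field; lra.
apply: Rmult_le_compat_r; first by apply: Rlt_le; apply: Rinv_0_lt_compat.
apply: Rmult_le_compat_r => //; rewrite Rpow_mult_distr -Rmult_assoc.
by have := Rmult_le_compat _ _ _ _ tree0 label0 tree label; rewrite !Rmult_assoc.
Qed.

Lemma inv_fact_le (d : nat) : (0 < d)%nat -> / INR d`! <= exp (INR d) / INR d ^ d.
Proof.
move=> d_gt0.
have fact_gt0 := INR_fact_gt0 d.
have dd_gt0 : 0 < INR d ^ d by apply: pow_lt; apply: lt_0_INR; apply/ltP.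
apply: (Rmult_le_reg_r (INR d`! * INR d ^ d)); first nra.
have -> : / INR d`! * (INR d`! * INR d ^ d) = INR d ^ d by field; lra.
have -> : exp (INR d) / INR d ^ d * (INR d`! * INR d ^ d) = INR d`! * exp (INR d)
  by field; lra.
exact: pow_self_le_fact.
Qed.

(* The extra-edge factor: (2 x^7 c)^d / d! <= (2 c e / x)^d <= exp (-5 x^8). *)
Lemma extra_factor_le_exp (c x : R) (d : nat) : 0 < c -> 2 * c * exp 6 <= x ->
  INR d = x ^ 8 -> (2 * x ^ 7 * c) ^ d / INR d`! <= exp (- 5 * x ^ 8).
Proof.
move=> c_gt0 x_large d_eq.
have e6 : 1 <= exp 6 by have := exp_ineq1_le 6; lra.
have x_gt0 : 0 < x by nra.
have d_gt0 : (0 < d)%nat by apply/ltP; apply: INR_lt; rewrite d_eq; exact: pow_lt.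
have base0 : 0 <= (2 * x ^ 7 * c) ^ d by apply: pow_le; have := pow_lt x 7 x_gt0; nra.
apply: Rle_trans (_ : (2 * x ^ 7 * c) ^ d * (exp (INR d) / INR d ^ d) <= _).
  by apply: Rmult_le_compat_l => //; exact: inv_fact_le.
have -> : (2 * x ^ 7 * c) ^ d * (exp (INR d) / INR d ^ d) =
          (2 * c / x) ^ d * exp (INR d).
  have ratio : 2 * x ^ 7 * c * / x ^ 8 = 2 * c / x by field; lra.
  rewrite d_eq -ratio [in RHS]Rpow_mult_distr pow_inv; field.
  by apply: pow_nonzero; apply: pow_nonzero; lra.
have ratio_small : 2 * c / x <= exp (-6).
  rewrite exp_Ropp; apply: (Rmult_le_reg_r (x * exp 6)); first nra.
  have -> : 2 * c / x * (x * exp 6) = 2 * c * exp 6 by field; lra.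
  by have -> : / exp 6 * (x * exp 6) = x by field; have := exp_pos 6; lra.
have ratio0 : 0 <= 2 * c / x by apply: Rle_mult_inv_pos; lra.
apply: Rle_trans (_ : exp (-6) ^ d * exp (x ^ 8) <= _).
  rewrite d_eq; apply: Rmult_le_compat_r; first exact: Rlt_le (exp_pos _).
  by apply: pow_incr; lra.
by rewrite exp_pow_nat -exp_plus d_eq; right; congr exp; ring.
Qed.

Lemma pow8_le_exp (y : R) : 0 <= y -> (y / 8) ^ 8 <= exp y.
Proof.
move=> y_ge0; rewrite {2}(_ : y = INR 8 * (y / 8)); last by rewrite /=; field.
rewrite -exp_pow_nat; apply: pow_incr; split; first lra.
by have := exp_ineq1_le (y / 8); lra.
Qed.

Lemma tree_label_factor_le_exp (c : R) (t : nat) : 0 < c ->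
  (c + 1) * 10 * 80 ^ 8 <= INR t ->
  ((c + 1) * INR (10 * expn t 7)) ^ (5 * expn t 7) <= exp (INR t ^ 8 / 2).
Proof.
move=> c_gt0 t_large; set x := INR t in t_large *.
have e80 : 1 <= 80 ^ 8 by apply: pow_R1_Rle; lra.
have x_ge1 : 1 <= x by nra.
have x7_gt0 : 0 < x ^ 7 by apply: pow_lt; lra.
have base_le : (c + 1) * (10 * x ^ 7) <= exp (x / 10).
  apply: Rle_trans (pow8_le_exp (y := x / 10) ltac:(lra)).
  rewrite (_ : x / 10 / 8 = x * / 80); last by field.
  rewrite Rpow_mult_distr (_ : x ^ 8 = x * x ^ 7); last by rewrite /=; ring.
  have : (c + 1) * 10 <= x * (/ 80) ^ 8.
    apply: (Rmult_le_reg_r (80 ^ 8)); first by apply: pow_lt; lra.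
    have e : (/ 80) ^ 8 * 80 ^ 8 = 1 by rewrite -Rpow_mult_distr Rinv_l ?pow1; lra.
    by rewrite [X in _ <= X]Rmult_assoc e; lra.
  have : 0 < (/ 80) ^ 8 by apply: pow_lt; lra.
  nra.
have ten : INR 10 = 10 by rewrite /=; lra.
rewrite mult_INR INR_expn -/x ten.
apply: Rle_trans (_ : exp (x / 10) ^ (5 * expn t 7) <= _).
  by apply: pow_incr; split => //; nra.
rewrite exp_pow_nat mult_INR INR_expn -/x (_ : INR 5 = 5); last by rewrite /=; lra.
by right; congr exp; rewrite (_ : x ^ 8 = x * x ^ 7); [field | rewrite /=; ring].
Qed.

(* (x+1)^8 <= 3 x^8 for x >= 8: ln n < (t+1)^8 <= 3 t^8. *)
Lemma succ_pow8_le (x : R) : 8 <= x -> (x + 1) ^ 8 <= 3 * x ^ 8.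
Proof.
move=> x_ge8; apply: Rle_trans (_ : (9/8 * x) ^ 8 <= _); first by apply: pow_incr; lra.
rewrite Rpow_mult_distr; apply: Rmult_le_compat_r; first by apply: pow_le; lra.
by rewrite /=; lra.
Qed.

Lemma witness_sum_le_exp (c : R) : 0 < c -> exists T0 : nat, forall n t : nat,
  (T0 <= t)%nat -> 1 <= INR n -> INR n <= exp ((INR t + 1) ^ 8) ->
  INR (5 * expn t 7 + 1) * (INR n * ((c + 1) * INR (10 * expn t 7)) ^ (5 * expn t 7) *
    (2 * INR (expn t 7) * c) ^ (expn t 8) / INR (expn t 8)`!) <= exp (- INR t).
Proof.
move=> c_gt0.
pose M := 2 * c * exp 6 + (c + 1) * 10 * 80 ^ 8 + 8.
have [T0 T0_large] := INR_archimed 1 M Rlt_0_1.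
exists T0 => n t t_ge n_ge1 n_le.
have x_large : M < INR t by have := le_INR _ _ (elimT leP t_ge); lra.
have e6 : 1 <= exp 6 by have := exp_ineq1_le 6; lra.
have e80 : 1 <= 80 ^ 8 by apply: pow_R1_Rle; lra.
set x := INR t in x_large *.
have x_ge8 : 8 <= x by rewrite /M in x_large; nra.
have x7_ge1 : 1 <= x ^ 7 by apply: pow_R1_Rle; lra.
have count_le : INR (5 * expn t 7 + 1) <= exp (x ^ 8).
  rewrite plus_INR mult_INR INR_expn -/x; have := exp_ineq1_le (x ^ 8).
  by rewrite (_ : x ^ 8 = x * x ^ 7); [rewrite /=; nra | rewrite /=; ring].
have n_le' : INR n <= exp (3 * x ^ 8).
  by apply: Rle_trans n_le _; apply: exp_le_mono; exact: succ_pow8_le.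
have [x_large1 x_large2] : 2 * c * exp 6 <= x /\ (c + 1) * 10 * 80 ^ 8 <= x.
  by rewrite /M in x_large; have := exp_pos 6; split; nra.
have tree_le := tree_label_factor_le_exp c_gt0 x_large2.
have extra_le : (2 * INR (expn t 7) * c) ^ (expn t 8) / INR (expn t 8)`! <= exp (- 5 * x ^ 8).
  by rewrite INR_expn; apply: extra_factor_le_exp; rewrite ?INR_expn.
have tree0 : 0 <= ((c + 1) * INR (10 * expn t 7)) ^ (5 * expn t 7).
  by apply: pow_le; have := pos_INR (10 * expn t 7); nra.
have extra0 : 0 <= (2 * INR (expn t 7) * c) ^ (expn t 8) / INR (expn t 8)`!.
  apply: Rle_mult_inv_pos; last exact: INR_fact_gt0.
  by apply: pow_le; have := pos_INR (expn t 7); nra.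
set tree := ((c + 1) * INR (10 * expn t 7)) ^ (5 * expn t 7) in tree_le tree0 *.
have reassoc (a b u v w : R) : a * (b * u * v / w) = a * b * u * (v / w).
  by rewrite /Rdiv; ring.
rewrite reassoc.
set extra := (2 * INR (expn t 7) * c) ^ (expn t 8) / INR (expn t 8)`! in extra_le extra0 *.
apply: Rle_trans (_ : exp (x ^ 8) * exp (3 * x ^ 8) * exp (x ^ 8 / 2) * exp (- 5 * x ^ 8) <= _).
  have count0 := pos_INR (5 * expn t 7 + 1); have n0 := pos_INR n.
  apply: Rmult_le_compat => //; first by do 2 apply: Rmult_le_pos => //.
  apply: Rmult_le_compat => //; first exact: Rmult_le_pos.
  exact: Rmult_le_compat.
rewrite -!exp_plus; apply: exp_le_mono.
have : x <= x ^ 7 by rewrite -{1}(pow_1 x); apply: Rle_pow; [lra | apply/leP].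
have : x ^ 8 = x * x ^ 7 by rewrite /=; ring.
nra.
Qed.

(* The parameters s = t^7 <= ln^{7/8} n and B = t^2 <= ln^{1/4} n = b0 n
   fit when t <= ln^{1/8} n. *)
Lemma pow_le_root (l : R) (t m : nat) : 0 < l -> INR t <= Rpower l (1/8) ->
  INR (expn t m) <= Rpower l (INR m / 8).
Proof.
move=> l_gt0 t_le; have -> : INR m / 8 = 1/8 * INR m by field.
rewrite INR_expn.
rewrite -Rpower_mult Rpower_pow; last by rewrite /Rpower; exact: exp_pos.
by apply: pow_incr; split => //; exact: pos_INR.
Qed.

Lemma le_exp_root (n t : nat) : 0 < INR n -> 0 < ln (INR n) ->
  Rpower (ln (INR n)) (1/8) < INR t + 1 -> INR n <= exp ((INR t + 1) ^ 8).
Proof.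
move=> n_gt0 l_gt0 root_lt; rewrite -{1}(exp_ln _ n_gt0); apply: exp_le_mono.
have -> : ln (INR n) = Rpower (ln (INR n)) (1/8) ^ 8.
  rewrite -Rpower_pow; last by rewrite /Rpower; exact: exp_pos.
  have eighth : 1 / 8 * INR 8 = 1 by rewrite /=; lra.
  by rewrite Rpower_mult eighth Rpower_1.
by apply: pow_incr; split; [rewrite /Rpower; apply: Rlt_le; apply: exp_pos | lra].
Qed.

Lemma sizes_fit (t : nat) : (5 <= t)%nat ->
  (2 * (expn t 8 + 5 * expn t 7) <= expn t 7 * expn t 2)%nat.
Proof.
move=> t_ge5; rewrite (expnS t 7) -mulnDl mulnA [X in (_ <= X)%nat]mulnC leq_mul2r.
by apply/orP; right; nia.
Qed.

Lemma gnp_param_range (c : R) (n : nat) : 0 < c -> c <= INR n -> 0 <= c / INR n <= 1.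
Proof.
move=> c_gt0 c_le; split; first by apply: Rle_mult_inv_pos; lra.
by apply: (Rmult_le_reg_r (INR n)); [lra | rewrite /Rdiv Rmult_assoc Rinv_l; lra].
Qed.

Lemma bad_prob_le_exp (c : R) : 0 < c -> exists T0 : nat, forall n t : nat,
  (T0 <= t)%nat -> (5 <= t)%nat -> c <= INR n -> 1 <= INR n -> 0 < ln (INR n) ->
  INR t <= Rpower (ln (INR n)) (1/8) < INR t + 1 ->
  gnp_prob (c / INR n) (fun g : graph n => [exists S : {set 'I_n}, bad_set g S])
    <= exp (- INR t).
Proof.
move=> c_gt0; have [T0 sum_small] := witness_sum_le_exp c_gt0.
exists T0 => n t t_ge t_ge5 c_le n_ge1 l_gt0 [root_ge root_lt].
have p_range := gnp_param_range c_gt0 c_le.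
have s_gt0 : (0 < expn t 7)%nat by rewrite expn_gt0; case: t t_ge5 {t_ge root_ge root_lt}.
have s_fit : INR (expn t 7) <= Rpower (ln (INR n)) (7 / 8).
  by rewrite (_ : 7 / 8 = INR 7 / 8); [exact: pow_le_root | rewrite /=; lra].
have B_fit : INR (expn t 2) <= b0 n.
  by rewrite /b0 (_ : 1 / 4 = INR 2 / 8); [exact: pow_le_root | rewrite /=; lra].
apply: Rle_trans (bad_prob_le_witness_sum p_range s_gt0 s_fit B_fit (sizes_fit t_ge5)) _.
have n_small := @le_exp_root n t ltac:(lra) l_gt0 root_lt.
apply: Rle_trans _ (sum_small n t t_ge n_ge1 n_small).
rewrite -(card_ord (5 * expn t 7 + 1)) -Rsum_const addn1; apply: Rsum_le => k _.
by apply: witness_term_le => //; rewrite -ltnS.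
Qed.

Lemma floor_exists (r : R) : 0 <= r -> exists t : nat, INR t <= r < INR t + 1.
Proof.
move=> r_ge0; have [int_le int_gt] := base_Int_part r.
have int_ge0 : (0 <= Int_part r)%Z.
  by have := lt_IZR (-1) (Int_part r) ltac:(lra); lia.
by exists (Z.to_nat (Int_part r)); rewrite INR_IZR_INZ Z2Nat.id //; lra.
Qed.

Lemma root_ln_floor_large (T : nat) (Y : R) : exists N : nat, forall n : nat,
  (N <= n)%nat -> Y < INR n /\ 0 < ln (INR n) /\
  exists t : nat, (T <= t)%nat /\ INR t <= Rpower (ln (INR n)) (1/8) < INR t + 1.
Proof.
pose Z := Rmax Y (exp ((INR T + 1) ^ 8)) + 1.
have [N N_large] := INR_archimed 1 Z Rlt_0_1.
exists N => n n_ge.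
have n_large : Z < INR n by have := le_INR _ _ (elimT leP n_ge); lra.
have [Y_lt exp_lt] : Y < INR n /\ exp ((INR T + 1) ^ 8) < INR n.
  have := Rmax_l Y (exp ((INR T + 1) ^ 8)); have := Rmax_r Y (exp ((INR T + 1) ^ 8)).
  by rewrite /Z in n_large; lra.
have T_lt : (INR T + 1) ^ 8 < ln (INR n).
  by rewrite -[X in X < _]ln_exp; apply: ln_increasing => //; exact: exp_pos.
have T8_ge0 : 0 <= (INR T + 1) ^ 8 by apply: pow_le; have := pos_INR T; lra.
have root_gt0 : 0 < Rpower (ln (INR n)) (1/8) by rewrite /Rpower; exact: exp_pos.
have [t [t_le t_gt]] := floor_exists (Rlt_le _ _ root_gt0).
split => //; split; first lra.
exists t; split => //; apply/leP; apply: INR_le.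
suff : INR T + 1 < Rpower (ln (INR n)) (1/8) by lra.
case: (Rlt_le_dec (INR T + 1) (Rpower (ln (INR n)) (1/8))) => // root_le.
have := pow_incr _ _ 8 (conj (Rlt_le _ _ root_gt0) root_le).
rewrite -Rpower_pow // Rpower_mult (_ : 1 / 8 * INR 8 = 1) ?Rpower_1; [lra | lra | rewrite /=; lra].
Qed.

Lemma bad_prob_vanishes (c : R) : 0 < c ->
  Un_cv (fun n : nat =>
    gnp_prob (c / INR n) (fun g : graph n => [exists S : {set 'I_n}, bad_set g S])) 0.
Proof.
move=> c_gt0 eps eps_gt0.
have [T0 bad_small] := bad_prob_le_exp c_gt0.
have [T1 T1_large] := INR_archimed eps 1 eps_gt0.
have [N N_large] := root_ln_floor_large (maxn (maxn T0 T1) 5) (c + 1).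
exists N => n /leP n_ge; have [n_large [l_gt0 [t [t_ge root_t]]]] := N_large n n_ge.
move: t_ge; rewrite !geq_max => /andP [/andP [t_ge0 t_ge1] t_ge5].
have prob_small := bad_small n t t_ge0 t_ge5 ltac:(lra) ltac:(lra) l_gt0 root_t.
have [p_ge0 p_le1] := @gnp_param_range c n c_gt0 ltac:(lra).
rewrite /Rdist Rminus_0_r Rabs_right; last exact/Rle_ge/gnp_prob_ge0.
apply: Rle_lt_trans prob_small _.
have T1_le : INR T1 <= INR t by apply: le_INR; apply/leP.
have exp_t := exp_ineq1_le (INR t).
rewrite exp_Ropp; apply: (Rmult_lt_reg_r (exp (INR t))); first exact: exp_pos.
rewrite Rinv_l; last by have := exp_pos (INR t); lra.
nra.
Qed.

Theorem mainTheorem7 (c : R) (hc : (0 < c)%R) :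
  Un_cv (fun n : nat =>
           gnp_prob (c / INR n)%R
             (fun g : graph n => ~~ [exists S : {set 'I_n}, bad_set g S]))
        1%R.
Proof.
move=> eps eps_gt0; have [N bad_close] := bad_prob_vanishes hc eps_gt0.
exists N => n n_ge; rewrite gnp_prob_compl.
have := bad_close n n_ge; rewrite /Rdist.
by rewrite (_ : forall a, 1 - a - 1 = - (a - 0)) ?Rabs_Ropp // => a; ring.
Qed.
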